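(* A filter $D$ on $\omega$ is not nowhere dense if and only if there is a function $f\colon\omega\to{}^{\omega>}2$ such that for every $B\in D$ the set $f(B)$ is somewhere dense.
   Context: ${}^{\omega>}2$ is the set of finite $0$-$1$ sequences; for $\eta,\nu\in{}^{\omega>}2$, $\eta^\frown\nu$ is their concatenation and $\eta\unlhd\varrho$ means $\varrho$ extends $\eta$. A set $X\subseteq{}^{\omega>}2$ is somewhere dense if there is $\eta\in{}^{\omega>}2$ such that for every $\nu\in{}^{\omega>}2$ there is $\varrho\in X$ with $\eta^\frown\nu\unlhd\varrho$. A filter $D$ on $\omega$ is nowhere dense if for every function $f\colon\omega\to{}^\omega 2$ there is $A\in D$ such that $f(A)$ is nowhere dense in the Cantor set ${}^\omega 2$. *)

From HB Require Import structures.
From mathcomp Require Import all_boot all_order all_algebra.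
From mathcomp Require Import all_classical all_reals all_analysis.
Set Implicit Arguments. Unset Strict Implicit. Unset Printing Implicit Defensive.
Local Open Scope classical_set_scope.

(* Finite 0-1 sequences are [seq bool]; eta ⊴ rho is [prefix eta rho];
   concatenation is [++].  The Cantor set ^omega 2 is mathcomp-analysis'
   [cantor_space] (bool^nat with the product topology). *)

Definition somewhere_dense (X : set (seq bool)) : Prop :=
  exists eta : seq bool, forall nu : seq bool,
    exists2 rho : seq bool, X rho & prefix (eta ++ nu) rho.

Definition nowhere_dense_set (A : set cantor_space) : Prop :=
  interior (closure A) = set0.

Definition nowhere_dense_filter (D : set (set nat)) : Prop :=
  forall f : nat -> cantor_space,
    exists2 A : set nat, D A & nowhere_dense_set (f @` A).

From HB Require Import structures.
From mathcomp Require Import all_boot all_order all_algebra.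
From mathcomp Require Import all_classical all_reals all_analysis.
Local Open Scope classical_set_scope.

Set Implicit Arguments.
Unset Strict Implicit.
Unset Printing Implicit Defensive.

(* Cylinders form a neighbourhood base of the Cantor space, so [f @` B] fails
   to be nowhere dense iff its closure contains a cylinder with some stem [eta].
   Then [g n] := the first [n] bits of [f n] works: given an extension [s] of
   [eta], of length [k], extend [s] further to a point [z] whose bit [k + i]
   differs from that of [f i] for all [i < k].  Any [f n], [n \in B], agreeing
   with [z] on [2k] bits must have [n >= k], so [s] is a prefix of [g n].
   Conversely, padding each [g n] with zeros turns a somewhere dense [g @` B]
   with stem [eta] into a set whose closure contains the cylinder of [eta]. *)

Definition cylinder (x : cantor_space) (n : nat) : set cantor_space :=
  [set y | forall i, (i < n)%N -> y i = x i].

Definition pad (s : seq bool) : cantor_space := fun i => nth false s i.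

Section Cylinders.
Implicit Types (x y z : cantor_space) (s t : seq bool).

Lemma le_cylinder x m n : (m <= n)%N -> cylinder x n `<=` cylinder x m.
Proof. by move=> mn y xy i im; apply: xy; apply: leq_trans mn. Qed.

Lemma cylinder_trans x y z n :
  cylinder x n y -> cylinder y n z -> cylinder x n z.
Proof. by move=> xy yz i iltn; rewrite yz ?xy. Qed.

Lemma eq_cylinder x y n :
  (forall i, (i < n)%N -> x i = y i) -> cylinder x n = cylinder y n.
Proof.
move=> xy; apply/seteqP; split => z zx i iltn; first by rewrite -xy ?zx.
by rewrite xy ?zx.
Qed.

Lemma cylinder_nbhs x n : nbhs x (cylinder x n).
Proof.
elim: n => [|n IHn]; first by apply: filterS filterT => y _ i.
have xn : nbhs x [set y : cantor_space | y n = x n].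
  apply: (@proj_continuous nat (fun _ => bool) n x [set x n]).
  exact: discrete_set1.
apply: filterS (filterI IHn xn) => y [yx ynx] i; rewrite ltnS leq_eqVlt.
by case/orP => [/eqP -> //|]; apply: yx.
Qed.

Lemma cvg_cantor_pointwise (y : nat -> cantor_space) x :
  (forall i, \forall n \near \oo, y n i = x i) -> y @ \oo --> x.
Proof.
move=> yx; apply/cvg_sup => i V [W] [[Z] oZ <-] Zx ZV.
apply: (filterS ZV); rewrite nbhs_simpl.
by apply: filterS (yx i) => n /= ->.
Qed.

Lemma nbhs_cylinder x U : nbhs x U -> exists n, cylinder x n `<=` U.
Proof.
move=> Ux; apply: contrapT => /forallNP noncyl.
have yP n : exists y, cylinder x n y /\ ~ U y.
  by have /existsNP [y /not_implyP yP] := noncyl n; exists y.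
have [y {}yP] := choice yP.
have : y @ \oo --> x.
  apply: cvg_cantor_pointwise => i; exists i.+1 => // n /= ilen.
  exact: (proj1 (yP n)).
move=> /(_ U Ux) [n _ /(_ n (leqnn n))].
exact: (proj2 (yP n)).
Qed.

Lemma interior_cylinderP (A : set cantor_space) x :
  interior A x <-> exists n, cylinder x n `<=` A.
Proof.
split; first exact: nbhs_cylinder.
by case=> n xnA; apply: filterS xnA (cylinder_nbhs x n).
Qed.

Lemma closure_cylinderP (A : set cantor_space) x :
  closure A x <-> forall n, exists2 y, A y & cylinder x n y.
Proof.
split=> [xA n | xA U /nbhs_cylinder [n xnU]].
  by have [y [Ay xny]] := xA _ (cylinder_nbhs x n); exists y.
by have [y Ay /xnU Uy] := xA n; exists y.
Qed.

Lemma cylinder_pad_mkseq x n : cylinder (pad (mkseq x n)) n = cylinder x n.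
Proof. by apply: eq_cylinder => i iltn; rewrite /pad nth_mkseq. Qed.

Lemma prefix_cylinder_pad s t : prefix s t -> cylinder (pad s) (size s) (pad t).
Proof. by case/prefixP => u -> i ilts; rewrite /pad nth_cat ilts. Qed.

Lemma prefix_mkseq s x n :
  (size s <= n)%N -> cylinder (pad s) (size s) x -> prefix s (mkseq x n).
Proof.
move=> sn sx; have size_take_s : size (take (size s) (mkseq x n)) = size s.
  by rewrite size_takel // size_mkseq.
rewrite prefixE; apply/eqP/(@eq_from_nth _ false) => // i; rewrite size_take_s.
by move=> ilts; rewrite nth_take // nth_mkseq ?sx //; apply: leq_trans sn.
Qed.

End Cylinders.

Lemma diagonal_extension (f : nat -> cantor_space) (s : seq bool) :
  exists2 t, prefix s t &
    forall n, (n < size s)%N -> ~ cylinder (pad t) (size t) (f n).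
Proof.
set k := size s; exists (s ++ mkseq (fun i => ~~ f i (k + i)) k).
  exact: prefix_prefix.
move=> n nk /(_ (k + n)); rewrite size_cat size_mkseq ltn_add2l => /(_ nk).
rewrite /pad nth_cat -/k ltnNge leq_addr /= addKn nth_mkseq //.
by case: (f n (k + n)).
Qed.

Lemma somewhere_dense_mkseq (f : nat -> cantor_space) (B : set nat) :
  ~ nowhere_dense_set (f @` B) ->
  somewhere_dense ((fun n => mkseq (f n) n) @` B).
Proof.
move=> /eqP/set0P [p /interior_cylinderP [m pm]].
exists (mkseq p m) => nu; set s := mkseq p m ++ nu.
have [t st tdiag] := diagonal_extension f s.
have tfB : closure (f @` B) (pad t).
  apply: pm; have := prefix_cylinder_pad (prefix_trans (prefix_prefix _ nu) st).
  by rewrite size_mkseq cylinder_pad_mkseq.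
have [_ [n Bn <-] tn] := (closure_cylinderP _ _).1 tfB (size t).
exists (mkseq (f n) n); first by exists n.
have sn : (size s <= n)%N by rewrite leqNgt; apply/negP => /tdiag.
apply: prefix_mkseq sn _; apply: cylinder_trans (prefix_cylinder_pad st) _.
exact: le_cylinder (size_prefix st) _ tn.
Qed.

Lemma somewhere_dense_pad (g : nat -> seq bool) (B : set nat) :
  somewhere_dense (g @` B) -> ~ nowhere_dense_set ((pad \o g) @` B).
Proof.
move=> [eta etaP]; apply/eqP/set0P; exists (pad eta).
apply/interior_cylinderP; exists (size eta) => y etay.
apply/closure_cylinderP => m; set N := (size eta + m)%N.
have etaN : prefix eta (mkseq y N) by apply: prefix_mkseq etay; exact: leq_addr.
have [_ [n Bn <-]] := etaP (drop (size eta) (mkseq y N)).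
move: etaN; rewrite prefixE => /eqP{1}<-; rewrite cat_take_drop.
move=> /prefix_cylinder_pad; rewrite size_mkseq cylinder_pad_mkseq => yn.
by exists (pad (g n)); [exists n | apply: le_cylinder (leq_addl _ _) _ yn].
Qed.

Theorem mainTheorem3 (D : set (set nat)) (hD : ProperFilter D) :
  ~ nowhere_dense_filter D <->
  exists f : nat -> seq bool, forall B : set nat, D B -> somewhere_dense (f @` B).
Proof.
split=> [notND | [g gD] ND].
- have [f fD] : exists f : nat -> cantor_space,
      forall A, D A -> ~ nowhere_dense_set (f @` A).
    apply: contrapT => /forallNP noF; apply: notND => f.
    have /existsNP [A /not_implyP [DA /contrapT ndA]] := noF f.
    by exists A.
  by exists (fun n => mkseq (f n) n) => B /fD /somewhere_dense_mkseq.
- have [B DB] := ND (pad \o g).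
  exact: somewhere_dense_pad (gD B DB).
Qed.
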